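(* Let $\Phi_1,\Phi_2$ be simple point processes on $\mathbb{R}^d$. If $\Phi_1$ has smaller void probabilities than $\Phi_2$, i.e. $\Pr\{\Phi_1(B)=0\}\le\Pr\{\Phi_2(B)=0\}$ for all bounded Borel $B$, then $\overline r_c(\Phi_1)\le\overline r_c(\Phi_2)$.
   Context: For $r>0$, $x\in\mathbb{R}^d$, let $Q^r=(-\frac{1}{2r},\frac{1}{2r}]^d$ and $Q^r(x)=x+Q^r$. For $n\in\mathbb{N}$, $\mathbb{L}^{*d}_n$ is the graph with vertex set $\mathbb{Z}^d_n=\frac1n\mathbb{Z}^d$ and edges $\langle z_i,z_j\rangle$ whenever $Q^{n/2}(z_i)\cap Q^{n/2}(z_j)\ne\emptyset$. A contour is a minimal collection of vertices of $\mathbb{L}^{*d}_n$ such that every infinite path in $\mathbb{L}^{*d}_n$ from the origin contains one of these vertices (minimal: removing any vertex yields an infinite path from the origin avoiding the remaining ones). $\Gamma_n$ is the set of all contours around the origin in $\mathbb{L}^{*d}_n$, and for $\gamma\subset\mathbb{R}^d$, $Q_\gamma=\bigcup_{z\in\gamma}Q^n(z)$. For a point process $\Phi$, $C(\Phi,r)=\bigcup_{X\in\Phi}B_X(r)$, and $\overline r_c(\Phi)=\inf\{r>0:\text{for all }n\ge1,\ \sum_{\gamma\in\Gamma_n}\Pr\{C(\Phi,r)\cap Q_\gamma=\emptyset\}<\infty\}$. *)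

From HB Require Import structures.
From mathcomp Require Import all_boot all_order all_algebra.
From mathcomp Require Import all_classical all_reals all_analysis measurable_realfun.
Set Implicit Arguments. Unset Strict Implicit. Unset Printing Implicit Defensive.
Import Order.TTheory GRing.Theory Num.Theory.
Import numFieldNormedType.Exports.
Local Open Scope classical_set_scope.
Local Open Scope ring_scope.

Section Defs.
Context {R : realType} {d : nat}.

Definition Rpt := 'rV[R]_d.

Definition edist (x y : Rpt) : R :=
  Num.sqrt (\sum_(i < d) (x ord0 i - y ord0 i) ^+ 2).

Definition ebounded (B : set Rpt) : Prop :=
  exists M : R, forall x, B x -> edist 0 x <= M.

Definition borel_Rd (B : set Rpt) : Prop := <<s [set U : set Rpt | open U] >> B.

Definition cube (r : R) (x : Rpt) : set Rpt :=
  [set y | forall i : 'I_d,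
     - (1 / (2 * r)) < y ord0 i - x ord0 i /\ y ord0 i - x ord0 i <= 1 / (2 * r)].

Definition eball (X : Rpt) (r : R) : set Rpt := [set y | edist X y <= r].

Definition cover (Phi : set Rpt) (r : R) : set Rpt :=
  \bigcup_(X in Phi) eball X r.

Definition npoints (Phi : set Rpt) (B : set Rpt) : \bar R :=
  (\esum_(x in Phi `&` B) 1)%E.

(* the lattice L*_n^d; vertex k in Z^d represents the Rpt k/n of Z^d_n *)
Definition vtx (n : nat) (k : 'rV[int]_d) : Rpt :=
  \row_i ((k ord0 i)%:~R / n%:R).

Definition ladj (n : nat) (k l : 'rV[int]_d) : Prop :=
  k <> l /\ (cube (n%:R / 2) (vtx n k) `&` cube (n%:R / 2) (vtx n l)) !=set0.

Definition inf_path (n : nat) (p : nat -> 'rV[int]_d) : Prop :=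
  p 0%N = 0 /\ injective p /\ forall m, ladj n (p m) (p m.+1).

Definition blocks (n : nat) (g : set 'rV[int]_d) : Prop :=
  forall p, inf_path n p -> exists m, g (p m).

(* contour around the origin: minimal blocking set; Gamma_n = contour n *)
Definition contour (n : nat) (g : set 'rV[int]_d) : Prop :=
  blocks n g /\ forall v, g v -> ~ blocks n (g `\ v).

Definition Qgamma (n : nat) (g : set 'rV[int]_d) : set Rpt :=
  \bigcup_(k in g) cube n%:R (vtx n k).

Definition simple_point_process {d0} {Omega : measurableType d0}
    (Phi : Omega -> set Rpt) : Prop :=
  (forall w B, ebounded B -> finite_set (Phi w `&` B)) /\
  (forall B, borel_Rd B -> ebounded B ->
     measurable_fun [set: Omega] (fun w => npoints (Phi w) B)).

Definition rc_bar {d0} {Omega : measurableType d0} (P : probability Omega R)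
    (Phi : Omega -> set Rpt) : \bar R :=
  ereal_inf [set r%:E | r in [set r : R | 0 < r /\
     forall n : nat, (1 <= n)%N ->
       (\esum_(g in contour n) P [set w | cover (Phi w) r `&` Qgamma n g = set0] < +oo)%E]].

End Defs.

(* The vacancy event {C(Phi, r) does not meet Q_gamma} is the void event
   {Phi(Q_gamma^r) = 0} of the closed r-thickening Q_gamma^r of Q_gamma.  The set
   Q_gamma is a countable union of half-open cubes, each a countable union of
   closed boxes, and the r-thickening of a closed box is a sublevel set of a
   continuous function, so Q_gamma^r is Borel.  It may be unbounded, but the void
   probability of a Borel set B is the decreasing limit of those of the bounded
   sets B ∩ B_0(m), so the comparison of void probabilities extends to all Borel
   sets.  Hence each term of the contour series of Phi1 is bounded by the
   corresponding term for Phi2, and every radius admissible for Phi2 is admissible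
   for Phi1. *)

From Pilot Require Import Defs.
From HB Require Import structures.
From mathcomp Require Import all_boot all_order all_algebra.
From mathcomp Require Import all_classical all_reals all_analysis measurable_realfun.
From mathcomp Require Import lra.
Import Order.TTheory GRing.Theory Num.Theory.
Import numFieldNormedType.Exports.
Set Implicit Arguments. Unset Strict Implicit. Unset Printing Implicit Defensive.
Local Open Scope classical_set_scope.
Local Open Scope ring_scope.

Section interval_distance.
Context {R : realType}.
Implicit Types l u t z : R.

Definition dist_itv l u t : R := `|t - Num.min (Num.max t l) u|.

Lemma dist_itv_ge0 l u t : 0 <= dist_itv l u t.
Proof. exact: normr_ge0. Qed.

Lemma dist_itv_le l u t z : l <= z -> z <= u -> dist_itv l u t <= `|t - z|.
Proof.
move=> lz zu; rewrite /dist_itv.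
case: (lerP t l) => tl; [|case: (lerP t u) => tu]; rewrite ?subrr ?normr0 //.
  by rewrite (min_l (le_trans lz zu)) !ler0_norm; lra.
by rewrite !ger0_norm; lra.
Qed.

Lemma dist_itv_attained l u t : l <= u ->
  exists2 z, l <= z <= u & `|t - z| = dist_itv l u t.
Proof.
move=> lu; exists (Num.min (Num.max t l) u) => //.
by rewrite le_min ge_min le_max !lexx lu !orbT.
Qed.

Lemma continuous_dist_itv l u : continuous (dist_itv l u).
Proof.
move=> t; have clamp : {for t, continuous (fun s : R => s - Num.min (Num.max s l) u)}.
  apply: (@continuousB _ _ _ id) => //.
  apply: (@continuous_min R R (fun s => Num.max s l) (fun=> u)); last exact: cst_continuous.
  by apply: (@continuous_max R R id (fun=> l) t) => //; exact: cst_continuous.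
exact: (continuous_comp clamp (@norm_continuous _ R^o _)).
Qed.

End interval_distance.

Section euclidean.
Context {R : realType} {d : nat}.
Local Notation point := (@Rpt R d).

Lemma continuous_sqrt_sum_coord (F : 'I_d -> R -> R) : (forall i, continuous (F i)) ->
  continuous (fun y : point => Num.sqrt (\sum_(i < d) F i (y ord0 i))).
Proof.
move=> Fc y; apply: continuous_comp; last exact: sqrt_continuous.
apply: (@continuous_big _ _ _ _ xpredT add_continuous) => i _ z.
exact: (continuous_comp (@coord_continuous R 1 d ord0 i z) (Fc i _)).
Qed.

Definition box (l u : 'I_d -> R) : set point := [set z | forall i, l i <= z ord0 i <= u i].

Lemma eventually_div_le (h e : R) : 0 < e -> \forall m \near \oo, h / m.+1%:R <= e.
Proof.
move=> e0; exists (Num.truncn (h / e)) => // m /= lem.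
rewrite ler_pdivrMr ?ltr0Sn // mulrC -ler_pdivrMr //.
apply/ltW/(lt_le_trans (truncnS_gt _)); by rewrite ler_nat ltnS.
Qed.

Lemma cube_bigcup_box (r : R) (x : point) : 0 < r ->
  cube r x = \bigcup_m box (fun i => x ord0 i - 1 / (2 * r) + 1 / (2 * r) / m.+1%:R)
                         (fun i => x ord0 i + 1 / (2 * r)).
Proof.
rewrite /cube; set h := 1 / (2 * r) => r0; have h0 : 0 < h by rewrite divr_gt0 ?mulr_gt0.
apply/seteqP; split => y /= yx; last first.
  move: yx => [m _ ym] i; have /andP[] := ym i.
  have : 0 < h / m.+1%:R by rewrite divr_gt0 ?ltr0Sn.
  move: (h / _) => hm; lra.
have [m _ hm] : \forall m \near \oo, forall i, h / m.+1%:R <= y ord0 i - x ord0 i + h.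
  by apply: filter_forall => i; apply: eventually_div_le; have [] := yx i; lra.
exists m => // i; have [_ yu] := yx i; have := hm m (leqnn m) i.
move: (h / _) => q le_q; apply/andP; split; lra.
Qed.

End euclidean.

Section borel.
Context {R : realType} {d : nat}.
Local Notation point := (@Rpt R d).
Local Notation borel_type := (g_sigma_algebraType [set U : set point | open U]).

Lemma borel_setI (A B : set point) : borel_Rd A -> borel_Rd B -> borel_Rd (A `&` B).
Proof. exact: (@measurableI _ borel_type). Qed.

Lemma borel_bigcup (I : countType) (D : set I) (F : I -> set point) :
  (forall i, D i -> borel_Rd (F i)) -> borel_Rd (\bigcup_(i in D) F i).
Proof.
move=> DF; rewrite bigcup_mkcond.
apply: (@countable_bigcupT_measurable _ borel_type) => [|i]; first exact: countableP.
by case: ifPn => [/set_mem/DF //|_]; exact: (@measurable0 _ borel_type).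
Qed.

Lemma borel_sublevel (f : point -> R) (c : R) : continuous f -> borel_Rd [set y | f y <= c].
Proof.
move=> fc; rewrite -[X in borel_Rd X]setCK.
apply: (@measurableC _ borel_type); apply: sub_sigma_algebra.
have -> : ~` [set y | f y <= c] = f @^-1` [set x | c < x].
  by apply/seteqP; split => y /=; rewrite ltNge => /negP.
by apply: open_comp; [move=> x _; exact: fc | exact: open_gt].
Qed.

End borel.

Section thickening.
Context {R : realType} {d : nat}.
Local Notation point := (@Rpt R d).

Definition thick (A : set point) (r : R) : set point :=
  [set y | exists2 z, A z & Defs.edist y z <= r].

Lemma thick_bigcup (I : Type) (D : set I) (A : I -> set point) r :
  thick (\bigcup_(i in D) A i) r = \bigcup_(i in D) thick (A i) r.
Proof.
apply/seteqP; split => y.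
  by move=> [z [i Di Aiz] yz]; exists i => //; exists z.
by move=> [i Di [z Aiz yz]]; exists z => //; exists i.
Qed.

Definition box_dist (l u : 'I_d -> R) (y : point) : R :=
  Num.sqrt (\sum_(i < d) dist_itv (l i) (u i) (y ord0 i) ^+ 2).

Lemma thick_box (l u : 'I_d -> R) r : (forall i, l i <= u i) ->
  thick (box l u) r = [set y | box_dist l u y <= r].
Proof.
move=> lu; apply/seteqP; split => y /=.
  move=> [z zlu]; apply: le_trans; rewrite /box_dist /Defs.edist ler_sqrt; last first.
    by apply: sumr_ge0 => i _; exact: sqr_ge0.
  apply: ler_sum => i _; have /andP[lz zu] := zlu i.
  rewrite -[X in _ <= X]real_normK ?num_real // ler_sqr ?nnegrE ?dist_itv_ge0 //.
  exact: dist_itv_le.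
move=> yr; have clamp i := dist_itv_attained (y ord0 i) (lu i).
exists (\row_i projT1 (cid2 (clamp i))) => [i|].
  by rewrite mxE; case: (cid2 (clamp i)).
rewrite [X in X <= _](_ : _ = box_dist l u y) // /box_dist /Defs.edist.
congr Num.sqrt; apply: eq_bigr => i _; rewrite mxE.
by case: (cid2 (clamp i)) => /= z _ <-; rewrite real_normK ?num_real.
Qed.

Lemma borel_thick_box (l u : 'I_d -> R) r : (forall i, l i <= u i) ->
  borel_Rd (thick (box l u) r).
Proof.
move=> lu; rewrite thick_box //; apply: borel_sublevel.
apply: (continuous_sqrt_sum_coord (F := fun i t => dist_itv (l i) (u i) t ^+ 2)) => i t.
exact: (continuous_comp (@continuous_dist_itv _ (l i) (u i) t) (@exprn_continuous R 2 _)).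
Qed.

Lemma borel_thick_cube (s : R) (x : point) r : 0 < s -> borel_Rd (thick (cube s x) r).
Proof.
move=> s0; rewrite cube_bigcup_box // thick_bigcup; apply: borel_bigcup => m _.
have h0 : 0 < 1 / (2 * s) by rewrite divr_gt0 ?mulr_gt0.
have : 1 / (2 * s) / m.+1%:R <= 1 / (2 * s).
  by rewrite ler_pdivrMr ?ltr0Sn // ler_pMr // ler1n.
move: (1 / (2 * s)) h0 => h h0; move: (h / _) => q hq.
by apply: borel_thick_box => i; lra.
Qed.

Lemma borel_thick_Qgamma n (g : set 'rV[int]_d) r : (0 < n)%N ->
  borel_Rd (thick (Qgamma n g) r).
Proof.
move=> n0; rewrite /Qgamma thick_bigcup; apply: borel_bigcup => k _.
by apply: borel_thick_cube; rewrite ltr0n.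
Qed.

End thickening.

Section void_probabilities.
Context {R : realType} {d : nat}.
Local Notation point := (@Rpt R d).

Definition void_event (T : Type) (Phi : T -> set point) (B : set point) : set T :=
  [set w | npoints (Phi w) B = 0%E].

Lemma npoints_eq0 (X B : set point) : npoints X B = 0%E <-> X `&` B = set0.
Proof.
split => [XB0|XB0]; last by rewrite /npoints XB0 esum_set0.
apply/seteqP; split => // x XBx; have : (1 <= npoints X B)%E.
  apply: esum_ge; exists [set x]; first by split; [exact: finite_set1 | move=> y ->].
  by rewrite fsbig_set1.
by rewrite XB0 lee_fin ler10.
Qed.

Lemma cover_disjoint_thick (X A : set point) r :
  Defs.cover X r `&` A = set0 <-> X `&` thick A r = set0.
Proof.
split => XA; apply/seteqP; split => // y.
  move=> [Xy [z Az yz]]; have : (Defs.cover X r `&` A) z by split => //; exists y.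
  by rewrite XA.
move=> [[x Xx xy] Ay]; have : (X `&` thick A r) x by split => //; exists y.
by rewrite XA.
Qed.

Lemma void_event_cover (T : Type) (Phi : T -> set point) (A : set point) r :
  [set w | Defs.cover (Phi w) r `&` A = set0] = void_event Phi (thick A r).
Proof.
apply/seteqP; split => w; rewrite /void_event /=.
  by move/cover_disjoint_thick/npoints_eq0.
by move/npoints_eq0/cover_disjoint_thick.
Qed.

Lemma void_eventS (T : Type) (Phi : T -> set point) (A B : set point) :
  A `<=` B -> void_event Phi B `<=` void_event Phi A.
Proof.
move=> AB w /npoints_eq0 XB0; apply/npoints_eq0; apply/seteqP; split => // y [Xy Ay].
have : (Phi w `&` B) y by split => //; exact: AB.
by rewrite XB0.
Qed.

Lemma borel_eball (x : point) r : borel_Rd (eball x r).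
Proof.
apply: borel_sublevel.
apply: (continuous_sqrt_sum_coord (F := fun i t => (x ord0 i - t) ^+ 2)) => i t.
have sub_x : {for t, continuous (fun s : R => x ord0 i - s)}.
  by apply: (@continuousB _ _ _ (fun=> x ord0 i) id) => //; exact: cst_continuous.
exact: (continuous_comp sub_x (@exprn_continuous R 2 _)).
Qed.

End void_probabilities.

Section void_probability_continuity.
Context {R : realType} {d : nat} (d0 : measure_display) (Omega : measurableType d0).
Variables (Pr : probability Omega R) (Phi : Omega -> set (@Rpt R d)).
Hypothesis Phi_spp : simple_point_process Phi.

Lemma measurable_void_event B : borel_Rd B -> ebounded B -> measurable (void_event Phi B).
Proof.
move=> Bb Bbd; rewrite -[void_event _ _]setTI.
exact: Phi_spp.2 B Bb Bbd measurableT [set 0%E] (emeasurable_set1 0%E).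
Qed.

Lemma void_event_bigcap B :
  \bigcap_m void_event Phi (B `&` eball 0 m%:R) = void_event Phi B.
Proof.
apply/seteqP; split => w /=; last by move=> XB0 m _; apply: void_eventS XB0 => y [].
move=> XBm0; apply/npoints_eq0; apply/seteqP; split => // y [Xy By].
set m := (Num.truncn (Defs.edist 0 y)).+1.
have /npoints_eq0 XBm0' := XBm0 m I.
have : (Phi w `&` (B `&` eball 0 m%:R)) y.
  by split => //; split => //; apply/ltW/truncnS_gt.
by rewrite XBm0'.
Qed.

Lemma void_prob_cvg B : borel_Rd B ->
  Pr (void_event Phi (B `&` eball 0 m%:R)) @[m --> \oo] --> Pr (void_event Phi B).
Proof.
move=> Bb; have mB m : measurable (void_event Phi (B `&` eball 0 m%:R)).
  by apply: measurable_void_event; [exact: borel_setI (borel_eball _ _) | exists m%:R => x []].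
rewrite -void_event_bigcap; apply: nonincreasing_cvg_mu => //.
- by rewrite (le_lt_trans (probability_le1 Pr (mB 0%N))) ?ltey.
- exact: bigcapT_measurable.
move=> m n mn; rewrite subsetEset; apply: void_eventS => y [By ym].
by split => //; apply: le_trans ym _; rewrite ler_nat.
Qed.

End void_probability_continuity.

Lemma void_prob_le_borel (R : realType) (d : nat)
    (d1 : measure_display) (Omega1 : measurableType d1) (P1 : probability Omega1 R)
    (d2 : measure_display) (Omega2 : measurableType d2) (P2 : probability Omega2 R)
    (Phi1 : Omega1 -> set (@Rpt R d)) (Phi2 : Omega2 -> set (@Rpt R d)) :
  simple_point_process Phi1 -> simple_point_process Phi2 ->
  (forall B, borel_Rd B -> ebounded B -> (P1 (void_event Phi1 B) <= P2 (void_event Phi2 B))%E) ->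
  forall B, borel_Rd B -> (P1 (void_event Phi1 B) <= P2 (void_event Phi2 B))%E.
Proof.
move=> spp1 spp2 void_le B Bb.
apply: (lee_cvg_to (void_prob_cvg (Pr := P1) spp1 Bb) (void_prob_cvg (Pr := P2) spp2 Bb)).
apply: nearW => m; apply: void_le; first exact: borel_setI (borel_eball _ _).
by exists m%:R => x [].
Qed.

Lemma rc_bar_le (R : realType) (d : nat)
    (d1 : measure_display) (Omega1 : measurableType d1) (P1 : probability Omega1 R)
    (d2 : measure_display) (Omega2 : measurableType d2) (P2 : probability Omega2 R)
    (Phi1 : Omega1 -> set (@Rpt R d)) (Phi2 : Omega2 -> set (@Rpt R d)) :
  (forall r n g, 0 < r -> (1 <= n)%N ->
    (P1 [set w | Defs.cover (Phi1 w) r `&` Qgamma n g = set0] <=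
     P2 [set w | Defs.cover (Phi2 w) r `&` Qgamma n g = set0])%E) ->
  (rc_bar P1 Phi1 <= rc_bar P2 Phi2)%E.
Proof.
move=> vacant_le; apply: ereal_inf_le_tmp => _ [r [r0 sum_fin] <-].
exists r => //; split => // n n1; apply: le_lt_trans (sum_fin n n1).
by apply: le_esum => g _; exact: vacant_le.
Qed.

Theorem corollary6p2 (R : realType) (d : nat)
  (d1 : measure_display) (Omega1 : measurableType d1) (P1 : probability Omega1 R)
  (d2 : measure_display) (Omega2 : measurableType d2) (P2 : probability Omega2 R)
  (Phi1 : Omega1 -> set (@Rpt R d)) (Phi2 : Omega2 -> set (@Rpt R d)) :
  simple_point_process Phi1 -> simple_point_process Phi2 ->
  (forall B : set (@Rpt R d), borel_Rd B -> ebounded B ->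
     (P1 [set w | npoints (Phi1 w) B = 0%E] <= P2 [set w | npoints (Phi2 w) B = 0%E])%E) ->
  (rc_bar P1 Phi1 <= rc_bar P2 Phi2)%E.
Proof.
move=> spp1 spp2 void_le; apply: rc_bar_le => r n g _ n1.
rewrite !void_event_cover; apply: void_prob_le_borel => //.
exact: borel_thick_Qgamma.
Qed.
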